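(* Let $(\Omega,\mathcal{A})$ be a measurable space with a $\sigma$-finite measure $\mu$, $\pi$ a probability density with respect to $\mu$, and $q_1,\dots,q_D$ transition densities (for each $x$, $q_d(x,\cdot)$ is a probability density with respect to $\mu$). Write $\bar\pi=\pi\otimes\pi$ and $(X,X')\sim\bar\pi$. Assume (A1): for every $d$, $\bar\pi\{(x,x'):q_d(x,x')=0\}=0$; (A2): for every $d$, $\mathbb{E}_{\bar\pi}[|\log q_d(X,X')|]<\infty$. Let $(\alpha^t)_{t\ge1}$ be defined by $\alpha^1=(1/D,\dots,1/D)$ and $\alpha^{t+1}=F(\alpha^t)$, where $F(\alpha)=\big(\mathbb{E}_{\bar\pi}[\alpha_dq_d(X,X')/\sum_{j=1}^D\alpha_jq_j(X,X')]\big)_{1\le d\le D}$. Then $\lim_{t\to\infty}\alpha^t=\alpha^{\max}$.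
   Context: $\mathcal{S}=\{\alpha\in\mathbb{R}^D:\alpha_d\ge0,\ \sum_d\alpha_d=1\}$; $\mathcal{E}_{\bar\pi}(\alpha)=\mathbb{E}_{\bar\pi}[\log\sum_{d=1}^D\alpha_dq_d(X,X')]$. Standing assumption of the paper's setting: $\mathcal{E}_{\bar\pi}$ is strictly concave on $\mathcal{S}$; $\alpha^{\max}$ denotes its unique global maximizer on $\mathcal{S}$ (equivalently, the weight vector minimizing the Kullback divergence between $\bar\pi$ and $\pi(dx)\sum_d\alpha_dQ_d(x,dx')$). *)

From HB Require Import structures.
From mathcomp Require Import all_boot all_order all_algebra.
From mathcomp Require Import all_classical all_reals all_analysis.
Set Implicit Arguments. Unset Strict Implicit. Unset Printing Implicit Defensive.
Import Order.TTheory GRing.Theory Num.Theory.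
Local Open Scope ring_scope.
Local Open Scope classical_set_scope.

Section defs.
Context (d : measure_display) (T : measurableType d) (R : realType).

Definition simplex (D : nat) (a : 'I_D -> R) : Prop :=
  (forall k, 0 <= a k) /\ \sum_(k < D) a k = 1.

Definition mixdens (D : nat) (q : 'I_D -> T -> T -> R) (a : 'I_D -> R) (x y : T) : R :=
  \sum_(k < D) a k * q k x y.

Definition pibar (mu : {sigma_finite_measure set T -> \bar R}) (pi : T -> R)
  (A : set (T * T)) : \bar R :=
  (\int[mu \x mu]_(z in A) (pi z.1 * pi z.2)%:E)%E.

Definition Epibar (mu : {sigma_finite_measure set T -> \bar R}) (pi : T -> R)
  (g : T * T -> \bar R) : \bar R :=
  (\int[mu \x mu]_z ((pi z.1 * pi z.2)%:E * g z))%E.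

(* calE_pibar(alpha) = E_pibar[ log sum_d alpha_d q_d(X,X') ] (finite under (A2)) *)
Definition calE (mu : {sigma_finite_measure set T -> \bar R}) (pi : T -> R)
  (D : nat) (q : 'I_D -> T -> T -> R) (a : 'I_D -> R) : R :=
  fine (Epibar mu pi (fun z => (ln (mixdens q a z.1 z.2))%:E)).

Definition Fmap (mu : {sigma_finite_measure set T -> \bar R}) (pi : T -> R)
  (D : nat) (q : 'I_D -> T -> T -> R) (a : 'I_D -> R) : 'I_D -> R :=
  fun k => fine (Epibar mu pi
    (fun z => (a k * q k z.1 z.2 / mixdens q a z.1 z.2)%:E)).

End defs.

From HB Require Import structures.
From mathcomp Require Import all_boot all_order all_algebra.
From mathcomp Require Import all_classical all_reals all_analysis.
From mathcomp Require Import measurable_realfun.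
From mathcomp Require Import ring lra.
Import Order.TTheory GRing.Theory Num.Theory numFieldNormedType.Exports.
Set Implicit Arguments. Unset Strict Implicit. Unset Printing Implicit Defensive.
Local Open Scope ring_scope.
Local Open Scope classical_set_scope.

(* For positive [a] and any [b] in the simplex, [ln y <= y - 1] applied
   pointwise to a ratio of responsibilities, followed by Gibbs' inequality, gives
     calE b - calE a <= sum_k F(b)_k (ln F(a)_k - ln a_k).
   With [b = amax] and [a = alpha^t], the gap [calE amax - calE alpha^t] is thus
   bounded by the increment from [alpha^t] to [alpha^(t+1)] of
   [Phi alpha = sum_k F(amax)_k ln alpha_k]; as [Phi <= 0] on the simplex, the gaps
   are summable and [calE alpha^t] tends to [calE amax].  By dominated convergence,
   with dominating function [sum_k |ln q_k|] (integrable by (A2)), calE is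
   continuous on the simplex, so by compactness every limit point of [alpha^t]
   maximizes calE and hence, by strict concavity, equals [amax]. *)

Lemma measurable_invr (R : realType) : measurable_fun [set: R] (@GRing.inv R).
Proof.
rewrite -set_itvNyy (@itv_bndbnd_setU _ _ _ (BLeft (0:R)))//.
apply/measurable_funU => //; split.
- apply: subspace_continuous_measurable_fun => //.
  rewrite continuous_open_subspace; last exact: interval_open.
  move=> x; rewrite inE/= in_itv/= => x0; apply: inv_continuous.
  by rewrite lt_eqF.
- rewrite (@itv_bndbnd_setU _ _ _ (BRight (0:R)))//; last by rewrite bnd_simp.
  apply/measurable_funU => //; split.
  + rewrite set_itv1; exact: measurable_fun_set1.
  + apply: subspace_continuous_measurable_fun => //.
    rewrite continuous_open_subspace; last exact: interval_open.
    move=> x; rewrite inE/= in_itv/= andbT => x0; apply: inv_continuous.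
    by rewrite gt_eqF.
Qed.

Lemma ln_le_subr1 (R : realType) (x : R) : 0 < x -> ln x <= x - 1.
Proof.
move=> x0; have := @le_ln1Dx R (x - 1); rewrite (addrC 1) subrK.
by apply; rewrite ltrBrDl subrr.
Qed.

Lemma mul_ln_ratio_le (R : realType) (b c : R) : 0 < b -> 0 < c ->
  c * (ln b - ln c) <= b - c.
Proof.
move=> b0 c0; rewrite -ln_div ?posrE//.
have := ler_wpM2l (ltW c0) (ln_le_subr1 (divr_gt0 b0 c0)).
by rewrite mulrBr mulr1 mulrCA divff ?gt_eqF// mulr1.
Qed.

Lemma cvg0_le_increments (R : realType) (e u : R ^nat) (M : R) :
  (forall n, 0 <= e n) -> (forall n, e n <= u n.+1 - u n) -> (forall n, u n <= M) ->
  e n @[n --> \oo] --> 0.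
Proof.
move=> e0 eu uM; apply: cvg_series_cvg_0; apply: nondecreasing_is_cvgn.
  by rewrite seriesEnat; apply: (nondecreasing_series (P := predT)) => n _ _.
exists (M - u 0%N) => _ [n _ <-].
suff : series e n <= u n - u 0%N by have := uM n; lra.
elim: n => [|n IH]; first by rewrite seriesEord /= big_ord0 subrr.
by rewrite seriesSr; have := eu n; lra.
Qed.

Lemma increasing_seq_geq (f : nat -> nat) : increasing_seq f -> forall n, (n <= f n)%N.
Proof.
move=> f_incr; elim => [//|n IH]; apply: leq_ltn_trans IH _.
have f_le : (f n.+1 <= f n)%N = (n.+1 <= n)%N := f_incr n.+1 n.
by rewrite ltnNge f_le ltnn.
Qed.

Lemma cvg_subsequence (V : topologicalType) (w : nat -> V) (l : V) (f : nat -> nat) :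
  (forall n, (n <= f n)%N) -> w n @[n --> \oo] --> l -> w (f n) @[n --> \oo] --> l.
Proof.
move=> f_ge; apply: cvg_trans; apply: cvg_comp (cvg_id) => A [N _ NA].
by exists N => // n /= Nn; apply: NA; exact: leq_trans Nn (f_ge n).
Qed.

Lemma not_cvg_frequently_far (R : realType) (u : R ^nat) (l : R) :
  ~ u n @[n --> \oo] --> l ->
  exists2 e, 0 < e & forall N, exists t, (N <= t)%N /\ e <= `|l - u t|.
Proof.
move=> not_cvg; apply: contrapT => H; apply: not_cvg; apply/cvgrPdist_lt => e e_gt0.
suff [N HN] : exists N, forall t, (N <= t)%N -> `|l - u t| < e.
  by exists N => // t /= Nt; exact: HN.
apply: contrapT => H'; apply: H; exists e => // N.
apply: contrapT => H''; apply: H'; exists N => t Nt.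
by rewrite ltNge; apply/negP => et; apply: H''; exists t.
Qed.

Lemma cvg_subsequence_unit_cube (R : realType) (D : nat) (u : nat -> 'I_D -> R) :
  (forall n k, 0 <= u n k <= 1) ->
  exists phi : nat -> nat, (forall n, (n <= phi n)%N) /\
    forall k, cvgn (fun n => u (phi n) k).
Proof.
move=> u01.
suff /(_ D (leqnn D)) [phi [phi_ge phi_cvg]] : forall j, (j <= D)%N ->
    exists phi : nat -> nat, (forall n, (n <= phi n)%N) /\
    forall k : 'I_D, (k < j)%N -> cvgn (fun n => u (phi n) k).
  by exists phi; split => // k; exact: phi_cvg (ltn_ord k).
elim => [_|j IH jD].
  by exists id; split => // k; rewrite ltn0.
have [phi [phi_ge phi_cvg]] := IH (ltnW jD).
pose kj : 'I_D := Ordinal jD.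
have bnd : bounded_fun (fun n => u (phi n) kj).
  exists 1; split => // M M1 n _ /=; have /andP[u0 u1] := u01 (phi n) kj.
  by rewrite ger0_norm// (le_trans u1)// ltW.
have [f f_incr f_cvg] := bolzano_weierstrass bnd.
have f_ge := increasing_seq_geq f_incr.
exists (phi \o f); split; first by move=> n /=; exact: leq_trans (f_ge n) (phi_ge (f n)).
move=> k; rewrite ltnS leq_eqVlt => /orP[/eqP kj_eq|kj_lt].
  by rewrite (_ : k = kj) //; exact: val_inj.
by apply/cvg_ex; eexists; exact: cvg_subsequence f_ge (phi_cvg k kj_lt).
Qed.

Section simplex.
Context (R : realType) (D : nat).
Implicit Types (a b c f x : 'I_D -> R).

Lemma ler_sumr_nneg f j : (forall k, 0 <= f k) -> f j <= \sum_(k < D) f k.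
Proof. by move=> f0; rewrite (bigD1 j)//= lerDl sumr_ge0. Qed.

Lemma simplex_ge0 a k : simplex a -> 0 <= a k.
Proof. by case. Qed.

Lemma simplex_le1 a k : simplex a -> a k <= 1.
Proof. by move=> [a0 <-]; exact: ler_sumr_nneg. Qed.

Lemma simplex_exists_gt0 a : simplex a -> exists j, 0 < a j.
Proof.
move=> [a0 a1]; apply: contrapT => /forallNP Hn.
suff : \sum_(k < D) a k = 0 by rewrite a1 => /eqP; rewrite oner_eq0.
apply: big1 => k _; apply/eqP; rewrite eq_le a0 andbT leNgt; exact/negP/Hn.
Qed.

Lemma simplex_exists_le a x : simplex a -> exists j, x j <= \sum_(k < D) a k * x k.
Proof.
move=> [a0 a1]; set S := \sum_(k < D) a k * x k.
apply: contrapT => /forallNP Hn.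
have hS j : S < x j by rewrite ltNge; exact/negP/Hn.
have hs : \sum_(k < D) a k * (x k - S) = 0.
  under eq_bigr do rewrite mulrBr.
  by rewrite sumrB -mulr_suml a1 mul1r subrr.
suff : \sum_(k < D) a k = 0 by rewrite a1 => /eqP; rewrite oner_eq0.
apply: big1 => k _.
have ge0 i : 0 <= a i * (x i - S) by rewrite mulr_ge0// subr_ge0 ltW.
have /eqP := psumr_eq0P (fun i _ => ge0 i) hs (i := k) isT.
by rewrite mulf_eq0 subr_eq0 (gt_eqF (hS k)) orbF => /eqP.
Qed.

Lemma simplex_exists_ge a x : simplex a -> exists j, \sum_(k < D) a k * x k <= x j.
Proof.
move=> sa; have [j hj] := simplex_exists_le (fun k => - x k) sa.
exists j; rewrite -lerN2; apply: le_trans hj _.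
by rewrite -sumrN; apply: ler_sum => k _; rewrite mulrN.
Qed.

Lemma gibbs_le0 b c : simplex b -> simplex c -> (forall k, b k = 0 -> c k = 0) ->
  \sum_(k < D) c k * (ln (b k) - ln (c k)) <= 0.
Proof.
move=> sb sc bc; apply: le_trans (_ : \sum_(k < D) (b k - c k) <= 0); last first.
  by rewrite sumrB (proj2 sb) (proj2 sc) subrr.
apply: ler_sum => k _.
have [bk0|bk] := eqVneq (b k) 0; first by rewrite (bc k bk0) bk0 mul0r subrr.
have [ck0|ck] := eqVneq (c k) 0; first by rewrite ck0 mul0r subr0 (simplex_ge0 k sb).
by apply: mul_ln_ratio_le; rewrite lt_def ?bk ?ck ?(simplex_ge0 k sb) ?(simplex_ge0 k sc).
Qed.

Lemma simplex_uniform : (0 < D)%N -> simplex (fun _ : 'I_D => (D%:R : R)^-1).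
Proof.
move=> D_gt0; split=> [k|]; first by rewrite invr_ge0.
by rewrite sumr_const card_ord -[LHS]mulr_natr mulVf// pnatr_eq0 -lt0n.
Qed.

Lemma simplex_lim (b : nat -> 'I_D -> R) c : (forall n, simplex (b n)) ->
  (forall k, b n k @[n --> \oo] --> c k) -> simplex c.
Proof.
move=> sb bc; split=> [k|].
  rewrite -(cvg_lim _ (bc k))//; apply: limr_ge; first by apply/cvg_ex; exists (c k).
  by apply: nearW => n; exact: simplex_ge0 k (sb n).
have sum_cvg : \sum_(k < D) b n k @[n --> \oo] --> \sum_(k < D) c k.
  by apply: (cvg_big add_continuous) => // k _; exact: bc.
have sum1 : \sum_(k < D) b n k @[n --> \oo] --> (1 : R).
  by under eq_cvg do rewrite (proj2 (sb _)); exact: cvg_cst.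
by rewrite -(cvg_lim _ sum_cvg)// (cvg_lim _ sum1).
Qed.

Section argmax.
Variables (L : ('I_D -> R) -> R) (amax : 'I_D -> R).

Lemma strictly_concave_argmax_unique :
  simplex amax -> (forall a, simplex a -> L a <= L amax) ->
  (forall a b, simplex a -> simplex b -> a <> b -> forall t, 0 < t < 1 ->
     t * L a + (1 - t) * L b < L (fun k => t * a k + (1 - t) * b k)) ->
  forall b, simplex b -> L b = L amax -> b = amax.
Proof.
move=> samax L_le concave b sb Lb; apply: contrapT => b_neq.
have half : 0 < (2^-1 : R) < 1 by rewrite invr_gt0 ltr0n invf_lt1 ?ltr0n ?ltr1n.
have smid : simplex (fun k => 2^-1 * b k + (1 - 2^-1) * amax k).
  split=> [k|]; first by rewrite addr_ge0 ?mulr_ge0 ?(simplex_ge0 k sb) ?(simplex_ge0 k samax); lra.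
  by rewrite big_split /= -!mulr_sumr (proj2 sb) (proj2 samax); lra.
by have := concave _ _ sb samax b_neq _ half; rewrite Lb; have := L_le _ smid; lra.
Qed.

Lemma cvg_argmax (a : nat -> 'I_D -> R) :
  (forall n, simplex (a n)) ->
  (forall (b : nat -> 'I_D -> R) c, (forall n, simplex (b n)) -> simplex c ->
     (forall k, b n k @[n --> \oo] --> c k) -> L (b n) @[n --> \oo] --> L c) ->
  (forall b, simplex b -> L b = L amax -> b = amax) ->
  L (a n) @[n --> \oo] --> L amax ->
  forall k, a n k @[n --> \oo] --> amax k.
Proof.
move=> sa L_cvg argmax_uniq La k; apply: contrapT => not_cvg.
have [e e_gt0 far] := not_cvg_frequently_far not_cvg.
have [g g_far] := choice far.
have [phi [phi_ge u_cvg]] :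
    exists phi : nat -> nat, (forall n, (n <= phi n)%N) /\
      forall j, cvgn (fun n => a (g (phi n)) j).
  apply: (cvg_subsequence_unit_cube (u := fun n => a (g n))) => n j.
  by rewrite (simplex_ge0 j (sa _)) (simplex_le1 j (sa _)).
pose c j := limn (fun n => a (g (phi n)) j).
have sc : simplex c by apply: simplex_lim u_cvg => n; exact: sa.
have gphi_ge n : (n <= g (phi n))%N := leq_trans (phi_ge n) (g_far (phi n)).1.
have Lc : L c = L amax.
  rewrite -(cvg_lim _ (L_cvg _ _ (fun n => sa _) sc u_cvg))//.
  exact: cvg_lim (cvg_subsequence gphi_ge La).
have c_cvg : a (g (phi n)) k @[n --> \oo] --> c k := u_cvg k.
have /cvgrPdist_lt/(_ e e_gt0) [N _ HN] := c_cvg.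
have := HN N (leqnn N); rewrite (argmax_uniq _ sc Lc) ltNge.
by rewrite (g_far (phi N)).2.
Qed.

End argmax.

End simplex.

Section pibar_expectation.
Context (d : measure_display) (T : measurableType d) (R : realType)
  (mu : {sigma_finite_measure set T -> \bar R}) (pi : T -> R).
Hypotheses (mpi : measurable_fun setT pi) (pi_ge0 : forall x, 0 <= pi x)
  (pi_int1 : (\int[mu]_x (pi x)%:E = 1)%E).
Local Notation m := (mu \x mu)%E.

Definition pi2 (z : T * T) : R := pi z.1 * pi z.2.

Definition Epi (g : T * T -> R) : R := fine (Epibar mu pi (fun z => (g z)%:E)).

Definition pibar_integrable (g : T * T -> R) :=
  measurable_fun setT g /\ m.-integrable setT (fun z => (pi2 z * g z)%:E).

Lemma measurable_pi2 : measurable_fun setT pi2.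
Proof.
apply: measurable_funM.
  exact: (measurableT_comp mpi measurable_fst).
exact: (measurableT_comp mpi measurable_snd).
Qed.

Lemma pi2_ge0 z : 0 <= pi2 z.
Proof. by rewrite /pi2 mulr_ge0. Qed.

Lemma measurable_pi2M g : measurable_fun setT g ->
  measurable_fun setT (fun z => (pi2 z * g z)%:E).
Proof. by move=> mg; apply/measurable_EFinP; exact: measurable_funM measurable_pi2 mg. Qed.

Lemma EpibarE g : Epibar mu pi (fun z => (g z)%:E) = (\int[m]_z (pi2 z * g z)%:E)%E.
Proof. by apply: eq_integral => z _; rewrite EFinM. Qed.

Lemma integral_pi2 : (\int[m]_z (pi2 z)%:E = 1)%E.
Proof.
rewrite (fubini_tonelli1 (fun z => (pi2 z)%:E)); last 2 first.
- by apply/measurable_EFinP; exact: measurable_pi2.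
- by move=> z; rewrite lee_fin pi2_ge0.
rewrite /fubini_F -[RHS]pi_int1; apply: eq_integral => x _ /=.
under eq_integral do rewrite /pi2 /= EFinM.
rewrite ge0_integralZl ?pi_int1 ?mule1 ?lee_fin//.
- by apply/measurable_EFinP.
- by move=> y _; rewrite lee_fin.
Qed.

Lemma integrable_pi2 : m.-integrable setT (fun z => (pi2 z)%:E).
Proof.
apply/integrableP; split; first by apply/measurable_EFinP; exact: measurable_pi2.
under eq_integral do rewrite gee0_abs ?lee_fin ?pi2_ge0//.
by rewrite integral_pi2 ltry.
Qed.

Lemma Epibar_fin_num g : pibar_integrable g ->
  Epibar mu pi (fun z => (g z)%:E) \is a fin_num.
Proof. by case=> _ ig; rewrite EpibarE; exact: integrable_fin_num. Qed.

Lemma pibar_integrableD g h : pibar_integrable g -> pibar_integrable h ->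
  pibar_integrable (fun z => g z + h z).
Proof.
move=> [mg ig] [mh ih]; split; first exact: measurable_funD.
apply: eq_integrable (integrableD _ ig ih) => // z _.
by rewrite mulrDr EFinD.
Qed.

Lemma EpiD g h : pibar_integrable g -> pibar_integrable h ->
  Epi (fun z => g z + h z) = Epi g + Epi h.
Proof.
move=> gg gh; rewrite /Epi -fineD ?Epibar_fin_num// !EpibarE.
have [[_ ig] [_ ih]] := (gg, gh); rewrite -integralD//.
by congr fine; apply: eq_integral => z _; rewrite mulrDr EFinD.
Qed.

Lemma pibar_integrableZ c g : pibar_integrable g ->
  pibar_integrable (fun z => c * g z).
Proof.
move=> [mg ig]; split; first exact: measurable_funM.
apply: eq_integrable (integrableZl measurableT c ig) => // z _.
by rewrite -EFinM mulrCA.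
Qed.

Lemma EpiZ c g : pibar_integrable g -> Epi (fun z => c * g z) = c * Epi g.
Proof.
move=> [_ ig]; rewrite /Epi !EpibarE.
under eq_integral do rewrite mulrCA EFinM.
by rewrite integralZl// fineM// integrable_fin_num.
Qed.

Lemma pibar_integrable_cst c : pibar_integrable (fun _ => c).
Proof.
split; first exact: measurable_cst.
apply: eq_integrable (integrableZl measurableT c integrable_pi2) => // z _.
by rewrite -EFinM mulrC.
Qed.

Lemma Epi_cst c : Epi (fun _ => c) = c.
Proof.
rewrite /Epi EpibarE.
under eq_integral do rewrite mulrC EFinM.
by rewrite integralZl ?integrable_pi2// integral_pi2 mule1.
Qed.

Lemma pibar_integrableB g h : pibar_integrable g -> pibar_integrable h ->
  pibar_integrable (fun z => g z - h z).
Proof.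
move=> gg gh; have := pibar_integrableD gg (pibar_integrableZ (-1) gh).
by under eq_fun do rewrite mulN1r.
Qed.

Lemma EpiB g h : pibar_integrable g -> pibar_integrable h ->
  Epi (fun z => g z - h z) = Epi g - Epi h.
Proof.
move=> gg gh; have := EpiD gg (pibar_integrableZ (-1) gh).
by rewrite EpiZ// mulN1r; under eq_fun do rewrite mulN1r.
Qed.

Lemma pibar_integrable_sum (I : Type) (s : seq I) (f : I -> T * T -> R) :
  (forall i, pibar_integrable (f i)) ->
  pibar_integrable (fun z => \sum_(i <- s) f i z).
Proof.
move=> gf; elim: s => [|i s IH].
  by under eq_fun do rewrite big_nil; exact: pibar_integrable_cst.
by under eq_fun do rewrite big_cons; exact: pibar_integrableD.
Qed.

Lemma Epi_sum (I : Type) (s : seq I) (f : I -> T * T -> R) :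
  (forall i, pibar_integrable (f i)) ->
  Epi (fun z => \sum_(i <- s) f i z) = \sum_(i <- s) Epi (f i).
Proof.
move=> gf; elim: s => [|i s IH].
  by under eq_fun do rewrite big_nil; rewrite big_nil Epi_cst.
under eq_fun do rewrite big_cons.
by rewrite big_cons EpiD ?IH//; exact: pibar_integrable_sum.
Qed.

Section full_set.
Variable S : set (T * T).
Hypothesis fullS : \forall z \ae m, S z \/ pi2 z = 0.

Lemma Epi_eq (g h : T * T -> R) : measurable_fun setT g -> measurable_fun setT h ->
  (forall z, S z -> g z = h z) -> Epi g = Epi h.
Proof.
move=> mg mh gh; rewrite /Epi !EpibarE; congr fine.
apply: ae_eq_integral => //; [exact: measurable_pi2M|exact: measurable_pi2M|].
apply: filterS fullS => z [Sz|->] _; first by rewrite gh.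
by rewrite !mul0r.
Qed.

Lemma Epi_ge0 (g : T * T -> R) : measurable_fun setT g -> (forall z, S z -> 0 <= g z) ->
  0 <= Epi g.
Proof.
move=> mg g0; rewrite (@Epi_eq g (fun z => `|g z|))//; last 2 first.
- exact: measurableT_comp.
- by move=> z Sz; rewrite ger0_norm// g0.
apply: fine_ge0; rewrite EpibarE; apply: integral_ge0 => z _.
by rewrite lee_fin mulr_ge0// pi2_ge0.
Qed.

Lemma Epi_le (g h : T * T -> R) : pibar_integrable g -> pibar_integrable h ->
  (forall z, S z -> g z <= h z) -> Epi g <= Epi h.
Proof.
move=> gg gh gh'; rewrite -subr_ge0 -EpiB//.
apply: Epi_ge0; first by case: (pibar_integrableB gh gg).
by move=> z Sz; rewrite subr_ge0 gh'.
Qed.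

Lemma pibar_integrable_le (g h : T * T -> R) : measurable_fun setT g -> pibar_integrable h ->
  (forall z, S z -> `|g z| <= h z) -> pibar_integrable g.
Proof.
move=> mg [mh ih] gh; split => //; apply/integrableP.
split; first exact: measurable_pi2M.
apply: le_lt_trans (integrableP _ _ _ ih).2.
apply: ae_ge0_le_integral => //; try (by move=> z _; exact: abse_ge0);
  try (by apply: measurableT_comp => //; exact: measurable_pi2M).
apply: filterS fullS => z [Sz|->] _; last by rewrite !mul0r abse0.
rewrite !abse_EFin lee_fin !normrM.
by rewrite ler_wpM2l ?pi2_ge0//; exact: le_trans (gh _ Sz) (ler_norm _).
Qed.

(* Jensen's inequality for [ln], from [ln y <= y - 1] at [y = g / expR (Epi h)]. *)
Lemma expR_Epi_ln_le (g h : T * T -> R) : pibar_integrable g -> pibar_integrable h ->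
  (forall z, S z -> 0 < g z /\ h z = ln (g z)) -> expR (Epi h) <= Epi g.
Proof.
move=> gg gh H; set c := expR (Epi h); have c0 : 0 < c := expR_gt0 _.
have : Epi (fun z => h z - Epi h) <= Epi (fun z => c^-1 * g z - 1).
  apply: Epi_le.
  - exact: pibar_integrableB gh (pibar_integrable_cst _).
  - exact: pibar_integrableB (pibar_integrableZ _ gg) (pibar_integrable_cst _).
  move=> z Sz; have [gp ->] := H z Sz.
  have := ln_le_subr1 (divr_gt0 gp c0).
  by rewrite ln_div ?posrE// /c expRK mulrC.
rewrite !EpiB ?EpiZ ?Epi_cst ?subrr ?subr_ge0//;
  [|exact: pibar_integrableZ|exact: pibar_integrable_cst|exact: pibar_integrable_cst].
by rewrite mulrC ler_pdivlMr // mul1r.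
Qed.

End full_set.

Section em_map.
Variables (D : nat) (q : 'I_D -> T -> T -> R).
Hypotheses (mq : forall k, measurable_fun setT (fun z : T * T => q k z.1 z.2))
  (q_ge0 : forall k x y, 0 <= q k x y)
  (q_ae_pos : forall k, pibar mu pi [set z | q k z.1 z.2 = 0] = 0%E)
  (lnq_int : forall k, (Epibar mu pi (fun z => (`|ln (q k z.1 z.2)|)%:E) < +oo)%E).
Implicit Types a b : 'I_D -> R.

Definition qpos : set (T * T) := [set z | forall k, 0 < q k z.1 z.2].

Definition mix a (z : T * T) : R := mixdens q a z.1 z.2.

Definition resp a k (z : T * T) : R := a k * q k z.1 z.2 / mix a z.

Definition lnq k (z : T * T) : R := ln (q k z.1 z.2).

Lemma FmapE a k : Fmap mu pi q a k = Epi (resp a k).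
Proof. by []. Qed.

Lemma calEE a : calE mu pi q a = Epi (fun z => ln (mix a z)).
Proof. by []. Qed.

Lemma pibar_full_qpos : \forall z \ae m, qpos z \/ pi2 z = 0.
Proof.
have h k : \forall z \ae m, q k z.1 z.2 = 0 -> pi2 z = 0.
  have mA : measurable [set z : T * T | q k z.1 z.2 = 0].
    by rewrite -[X in measurable X]setTI; exact: (mq k) _ (measurable_set1 0).
  have mpi2 : measurable_fun [set z : T * T | q k z.1 z.2 = 0] (fun z => (pi2 z)%:E).
    by apply/measurable_EFinP; exact: measurable_funS measurable_pi2.
  have : (\int[m]_(z in [set z : T * T | q k z.1 z.2 = 0%R]) `|(pi2 z)%:E|)%E = 0%E.
    rewrite -(q_ae_pos k); apply: eq_integral => z _.
    by rewrite gee0_abs// lee_fin pi2_ge0.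
  move/(ae_eq_integral_abs _ mA mpi2); apply: filterS => z hz qz.
  by have := hz qz => /= [[]].
apply: filterS (filter_forall (ae_filter_ringOfSetsType m) h) => z hz.
have [|nQz] := pselect (qpos z); [by left|right].
have [k /negP] : exists k, ~ 0 < q k z.1 z.2 by apply/existsNP => H; exact: nQz.
by rewrite lt_def q_ge0 andbT negbK => /eqP /hz.
Qed.

Lemma measurable_mix a : measurable_fun setT (mix a).
Proof.
by apply: measurable_sum => k; apply: measurable_funM => //; exact: measurable_cst.
Qed.

Lemma measurable_resp a k : measurable_fun setT (resp a k).
Proof.
apply: measurable_funM; first by apply: measurable_funM => //; exact: measurable_cst.
exact: measurableT_comp (@measurable_invr R) (measurable_mix a).
Qed.

Lemma mix_ge0 a z : (forall k, 0 <= a k) -> 0 <= mix a z.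
Proof. by move=> a0; apply: sumr_ge0 => k _; rewrite mulr_ge0. Qed.

Lemma mix_gt0 a z : simplex a -> qpos z -> 0 < mix a z.
Proof.
move=> sa qz; have [j aj] := simplex_exists_gt0 sa.
apply: lt_le_trans (ler_sumr_nneg j _); first by rewrite mulr_gt0.
by move=> k; rewrite mulr_ge0 ?(simplex_ge0 k sa).
Qed.

Lemma resp_ge0 a k z : (forall i, 0 <= a i) -> 0 <= resp a k z.
Proof. by move=> a0; rewrite divr_ge0 ?mulr_ge0 ?mix_ge0. Qed.

Lemma resp_le1 a k z : (forall i, 0 <= a i) -> resp a k z <= 1.
Proof.
move=> a0; have [m0|m_neq0] := eqVneq (mix a z) 0.
  by rewrite /resp m0 invr0 mulr0 ler01.
rewrite /resp ler_pdivrMr ?lt_def ?m_neq0 ?mix_ge0// mul1r /mix /mixdens.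
by apply: (ler_sumr_nneg (f := fun i => a i * q i z.1 z.2)) => i; rewrite mulr_ge0.
Qed.

Lemma sum_resp a z : simplex a -> qpos z -> \sum_(k < D) resp a k z = 1.
Proof. by move=> sa qz; rewrite -mulr_suml divff// gt_eqF// mix_gt0. Qed.

Lemma pibar_integrable_lnq k : pibar_integrable (lnq k).
Proof.
have mlnq : measurable_fun setT (lnq k) by exact: measurableT_comp.
split=> //; apply/integrableP; split; first exact: measurable_pi2M.
apply: le_lt_trans (lnq_int k); rewrite le_eqVlt; apply/orP; left; apply/eqP.
apply: eq_integral => z _.
by rewrite abse_EFin normrM (ger0_norm (pi2_ge0 z)) EFinM.
Qed.

Lemma pibar_integrable_lnq_bound : pibar_integrable (fun z => \sum_(k < D) `|lnq k z|).
Proof.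
apply: pibar_integrable_sum => k; have [mlnq ilnq] := pibar_integrable_lnq k.
split; first exact: measurableT_comp.
apply: eq_integrable (integrable_abse ilnq) => // z _ /=.
by rewrite normrM (ger0_norm (pi2_ge0 z)).
Qed.

(* The mixture lies between the smallest and the largest [q k], so [|ln mix|]
   is dominated by the integrable function [\sum_k |lnq k|]. *)
Lemma norm_ln_mix_le a z : simplex a -> qpos z ->
  `|ln (mix a z)| <= \sum_(k < D) `|lnq k z|.
Proof.
move=> sa qz; have mz := mix_gt0 sa qz.
have lnq_le k : `|lnq k z| <= \sum_(i < D) `|lnq i z| by exact: ler_sumr_nneg.
have [j hj] := simplex_exists_le (fun k => q k z.1 z.2) sa.
have [j' hj'] := simplex_exists_ge (fun k => q k z.1 z.2) sa.
rewrite ler_norml; apply/andP; split.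
- apply: le_trans (_ : lnq j z <= _); last by rewrite ler_ln ?posrE.
  by rewrite lerNl (le_trans _ (lnq_le j))// -normrN ler_norm.
- apply: le_trans (_ : lnq j' z <= _); first by rewrite ler_ln ?posrE.
  exact: le_trans (ler_norm _) (lnq_le j').
Qed.

Lemma pibar_integrable_ln_mix a : simplex a ->
  pibar_integrable (fun z => ln (mix a z)).
Proof.
move=> sa.
have mln : measurable_fun setT (fun z => ln (mix a z)).
  exact: measurableT_comp (measurable_mix a).
have bound z : qpos z -> `|ln (mix a z)| <= \sum_(k < D) `|lnq k z|.
  exact: norm_ln_mix_le.
exact (pibar_integrable_le pibar_full_qpos mln pibar_integrable_lnq_bound bound).
Qed.

Lemma pibar_integrable_resp a k : (forall i, 0 <= a i) ->
  pibar_integrable (resp a k).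
Proof.
move=> a0; apply: (pibar_integrable_le pibar_full_qpos (measurable_resp a k)
  (pibar_integrable_cst 1)).
by move=> z _; rewrite ger0_norm ?resp_le1 ?resp_ge0.
Qed.

Lemma Fmap_ge0 a k : (forall i, 0 <= a i) -> 0 <= Fmap mu pi q a k.
Proof.
move=> a0; apply: (Epi_ge0 pibar_full_qpos (measurable_resp a k)) => z _.
exact: resp_ge0.
Qed.

Lemma Fmap_eq0 a k : a k = 0 -> Fmap mu pi q a k = 0.
Proof.
move=> ak; rewrite -[RHS](Epi_cst 0); congr Epi.
by apply/funext => z; rewrite /resp ak !mul0r.
Qed.

Lemma Fmap_sum a : simplex a -> \sum_(k < D) Fmap mu pi q a k = 1.
Proof.
move=> sa; have a0 i := simplex_ge0 i sa.
rewrite -(Epi_sum _ (fun k => pibar_integrable_resp k a0)) -[RHS](Epi_cst 1).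
apply: (Epi_eq pibar_full_qpos); [|exact: measurable_cst|by move=> z; exact: sum_resp].
by apply: measurable_sum => k; exact: measurable_resp.
Qed.

Lemma simplex_Fmap a : simplex a -> simplex (Fmap mu pi q a).
Proof. by move=> sa; split; [move=> k; apply: Fmap_ge0; case: sa|exact: Fmap_sum]. Qed.

(* [ln (resp a k) = ln (a k) + lnq k - ln (mix a)] is integrable, so Jensen applies. *)
Lemma Fmap_gt0 a k : simplex a -> 0 < a k -> 0 < Fmap mu pi q a k.
Proof.
move=> sa ak; have a0 i := simplex_ge0 i sa.
apply: lt_le_trans (expR_gt0 _) (expR_Epi_ln_le pibar_full_qpos
  (pibar_integrable_resp k a0) (_ : pibar_integrable
    (fun z => ln (a k) + lnq k z - ln (mix a z))) _).
  apply: pibar_integrableB (pibar_integrable_ln_mix sa).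
  exact: pibar_integrableD (pibar_integrable_cst _) (pibar_integrable_lnq k).
move=> z qz; have mz := mix_gt0 sa qz; have qk := qz k.
split; first by rewrite divr_gt0 ?mulr_gt0.
by rewrite ln_div ?lnM ?posrE ?mulr_gt0.
Qed.

(* [ln y <= y - 1] at [y = (resp a k z / resp b k z) * (Fmap b k / Fmap a k)],
   multiplied by [resp b k z]. *)
Lemma resp_ln_mix_ratio_le a b k z : simplex a -> (forall i, 0 < a i) ->
  simplex b -> qpos z ->
  resp b k z * (ln (mix b z) - ln (mix a z)) <=
  (ln (b k) + ln (Fmap mu pi q a k) - ln (a k) - ln (Fmap mu pi q b k)) * resp b k z
  + Fmap mu pi q b k / Fmap mu pi q a k * resp a k z - resp b k z.
Proof.
move=> sa apos sb qz.
have [bk0|bk_neq0] := eqVneq (b k) 0.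
  have rb0 : resp b k z = 0 by rewrite /resp bk0 !mul0r.
  by rewrite rb0 (Fmap_eq0 bk0); lra.
have bk : 0 < b k by rewrite lt_def bk_neq0 (simplex_ge0 k sb).
set a' := Fmap mu pi q a k; set b' := Fmap mu pi q b k.
have a'_gt0 : 0 < a' := Fmap_gt0 sa (apos k).
have b'_gt0 : 0 < b' := Fmap_gt0 sb bk.
have mb := mix_gt0 sb qz; have ma := mix_gt0 sa qz; have qk := qz k; have ak := apos k.
pose y := mix b z / mix a z * (a k / b k) * (b' / a').
have y_gt0 : 0 < y by rewrite !mulr_gt0 ?invr_gt0.
have lny : ln y = ln (mix b z) - ln (mix a z) - (ln (b k) + ln a' - ln (a k) - ln b').
  by rewrite !lnM ?lnV ?posrE ?mulr_gt0 ?invr_gt0//; ring.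
have ry : resp b k z * y = b' / a' * resp a k z.
  by rewrite /y /resp; field; rewrite !gt_eqF.
have := ler_wpM2l (resp_ge0 k z (fun i => simplex_ge0 i sb)) (ln_le_subr1 y_gt0).
rewrite lny [X in _ <= X]mulrBr ry mulr1; lra.
Qed.

Lemma calE_sub_le a b : simplex a -> (forall k, 0 < a k) -> simplex b ->
  calE mu pi q b - calE mu pi q a <=
  \sum_(k < D) Fmap mu pi q b k * (ln (Fmap mu pi q a k) - ln (a k)).
Proof.
move=> sa apos sb; have a0 i := simplex_ge0 i sa; have b0 i := simplex_ge0 i sb.
pose K k := ln (b k) + ln (Fmap mu pi q a k) - ln (a k) - ln (Fmap mu pi q b k).
pose f k z := K k * resp b k z + Fmap mu pi q b k / Fmap mu pi q a k * resp a k z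
  - resp b k z.
have f_int k : pibar_integrable (f k).
  apply: pibar_integrableB (pibar_integrable_resp k b0).
  by apply: pibar_integrableD; apply: pibar_integrableZ; exact: pibar_integrable_resp.
have Ef k : Epi (f k) = K k * Fmap mu pi q b k.
  rewrite EpiB ?EpiD ?EpiZ -?FmapE; try by do ?[apply: pibar_integrableD|
    apply: pibar_integrableZ|apply: pibar_integrable_resp].
  by rewrite divfK ?addrK// gt_eqF// Fmap_gt0.
have : calE mu pi q b - calE mu pi q a <= Epi (fun z => \sum_(k < D) f k z).
  rewrite !calEE -EpiB; try exact: pibar_integrable_ln_mix.
  apply: (Epi_le pibar_full_qpos); last 1 first.
  - move=> z qz; rewrite -[X in X <= _]mul1r -(sum_resp sb qz) mulr_suml.
    by apply: ler_sum => k _; exact: resp_ln_mix_ratio_le.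
  - exact: pibar_integrableB (pibar_integrable_ln_mix sb) (pibar_integrable_ln_mix sa).
  - exact: pibar_integrable_sum.
move/le_trans; apply; rewrite Epi_sum// (eq_bigr _ (fun k _ => Ef k)).
have -> : \sum_(k < D) K k * Fmap mu pi q b k =
    \sum_(k < D) Fmap mu pi q b k * (ln (Fmap mu pi q a k) - ln (a k)) +
    \sum_(k < D) Fmap mu pi q b k * (ln (b k) - ln (Fmap mu pi q b k)).
  by rewrite -big_split; apply: eq_bigr => k _ /=; rewrite /K; ring.
rewrite gerDl; apply: gibbs_le0 => //; first exact: simplex_Fmap.
by move=> k /Fmap_eq0.
Qed.

Lemma calE_cvg (b : nat -> 'I_D -> R) c : (forall n, simplex (b n)) -> simplex c ->
  (forall k, b n k @[n --> \oo] --> c k) ->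
  calE mu pi q (b n) @[n --> \oo] --> calE mu pi q c.
Proof.
move=> sb sc bc.
pose f n z := (pi2 z * ln (mix (b n) z))%:E.
pose g z := (pi2 z * \sum_(k < D) `|lnq k z|)%:E.
have mf n : measurable_fun setT (f n).
  by apply: measurable_pi2M; exact: measurableT_comp (measurable_mix _).
have mfc : measurable_fun setT (fun z => (pi2 z * ln (mix c z))%:E).
  by apply: measurable_pi2M; exact: measurableT_comp (measurable_mix _).
have [_ ig] := pibar_integrable_lnq_bound.
have f_cvg : \forall z \ae m, setT z ->
    f ^~ z @ \oo --> (pi2 z * ln (mix c z))%:E.
  apply: filterS pibar_full_qpos => z [qz|pz0] _; last first.
    have -> : f ^~ z = cst (pi2 z * ln (mix c z))%:E.
      by apply/funext => n; rewrite /f pz0 !mul0r.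
    exact: cvg_cst.
  apply: cvg_EFin; first exact: nearW.
  apply: cvgMl_tmp; apply: (continuous_cvg _ (continuous_ln (mix_gt0 sc qz))).
  by apply: (cvg_big add_continuous) => // k _; apply: cvgMr_tmp; exact: bc.
have f_le_g : \forall z \ae m, forall n, setT z -> (`|f n z| <= g z)%E.
  apply: filterS pibar_full_qpos => z [qz|pz0] n _; last first.
    by rewrite /f /g pz0 !mul0r abse0.
  rewrite /f /g abse_EFin lee_fin normrM (ger0_norm (pi2_ge0 z)).
  by rewrite ler_wpM2l ?pi2_ge0 ?norm_ln_mix_le.
have [_ _ cvg_int] := dominated_convergence measurableT mf mfc f_cvg ig f_le_g.
have : Epibar mu pi (fun z => (ln (mix (b n) z))%:E) @[n --> \oo] -->
    (calE mu pi q c)%:E.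
  rewrite /calE fineK; last exact/Epibar_fin_num/pibar_integrable_ln_mix.
  by rewrite EpibarE; under eq_cvg do rewrite EpibarE.
by move/fine_cvg.
Qed.

Lemma calE_em_cvg (a : nat -> 'I_D -> R) amax :
  simplex amax -> (forall b, simplex b -> calE mu pi q b <= calE mu pi q amax) ->
  (forall n, simplex (a n)) -> (forall n k, 0 < a n k) ->
  (forall n, a n.+1 = Fmap mu pi q (a n)) ->
  calE mu pi q (a n) @[n --> \oo] --> calE mu pi q amax.
Proof.
move=> samax hmax sa apos aS.
pose Phi b := \sum_(k < D) Fmap mu pi q amax k * ln (b k).
pose gap n := calE mu pi q amax - calE mu pi q (a n).
have gap_ge0 n : 0 <= gap n by rewrite subr_ge0 hmax.
have gap_le n : gap n <= Phi (a n.+1) - Phi (a n).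
  apply: le_trans (calE_sub_le (sa n) (apos n) samax) _.
  by rewrite aS /Phi -sumrB; apply: ler_sum => k _; rewrite mulrBr.
have Phi_le0 n : Phi (a n) <= 0.
  apply: sumr_le0 => k _; apply: mulr_ge0_le0.
    by apply: Fmap_ge0 => i; exact: simplex_ge0 i samax.
  exact: ln_le0 (simplex_le1 k (sa n)).
suff -> : (fun n => calE mu pi q (a n)) = (fun n => calE mu pi q amax - gap n).
  rewrite -[X in _ --> X]subr0; apply: cvgB; first exact: cvg_cst.
  exact: cvg0_le_increments gap_ge0 gap_le Phi_le0.
by apply/funext => n; rewrite /gap opprB addrC subrK.
Qed.

End em_map.

End pibar_expectation.

Theorem proposition4p3 (d : measure_display) (T : measurableType d) (R : realType)
  (mu : {sigma_finite_measure set T -> \bar R}) (pi : T -> R)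
  (D : nat) (q : 'I_D -> T -> T -> R)
  (alpha : nat -> 'I_D -> R) (amax : 'I_D -> R) :
  (* pi is a probability density wrt mu *)
  measurable_fun setT pi -> (forall x, 0 <= pi x) ->
  (\int[mu]_x (pi x)%:E = 1)%E ->
  (* q_1..q_D are transition densities wrt mu *)
  (forall k, measurable_fun setT (fun z : T * T => q k z.1 z.2)) ->
  (forall k x y, 0 <= q k x y) ->
  (forall k x, (\int[mu]_y (q k x y)%:E = 1)%E) ->
  (* (A1) *)
  (forall k, pibar mu pi [set z | q k z.1 z.2 = 0] = 0%E) ->
  (* (A2) *)
  (forall k, (Epibar mu pi (fun z => (`|ln (q k z.1 z.2)|)%:E) < +oo)%E) ->
  (* standing assumption: calE is strictly concave on S *)
  (forall a b : 'I_D -> R, simplex a -> simplex b -> a <> b ->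
     forall t : R, 0 < t < 1 ->
       t * calE mu pi q a + (1 - t) * calE mu pi q b
         < calE mu pi q (fun k => t * a k + (1 - t) * b k)) ->
  (* amax is the global maximizer of calE on S *)
  simplex amax -> (forall a, simplex a -> calE mu pi q a <= calE mu pi q amax) ->
  (* the iteration *)
  alpha 1%N = (fun _ => (D%:R)^-1) ->
  (forall t, (1 <= t)%N -> alpha t.+1 = Fmap mu pi q (alpha t)) ->
  forall k, alpha t k @[t --> \oo] --> amax k.
Proof.
move=> mpi pi_ge0 pi_int1 mq q_ge0 _ q_ae_pos lnq_int concave samax calE_le
  alpha1 alphaS k.
have D_gt0 : (0 < D)%N := leq_ltn_trans (leq0n k) (ltn_ord k).
have alpha_pos t : simplex (alpha t.+1) /\ forall j, 0 < alpha t.+1 j.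
  elim: t => [|t [st pt]].
    by rewrite alpha1; split=> [|j]; [exact: simplex_uniform|rewrite invr_gt0 ltr0n].
  by rewrite alphaS//; split=> [|j]; [exact: simplex_Fmap|exact: Fmap_gt0 (pt j)].
rewrite -cvg_shiftS; move: k; apply: (cvg_argmax (L := calE mu pi q)).
- by move=> n; exact: (alpha_pos n).1.
- by move=> b c sb sc bc; apply: calE_cvg.
- by apply: strictly_concave_argmax_unique.
- apply: calE_em_cvg => // [n|n k|n]; first exact: (alpha_pos n).1.
    exact: (alpha_pos n).2.
  exact: alphaS.
Qed.
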